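(* Let $(A,d)$ be a $\mathbb{Z}/2$-graded $\Lambda$-algebra (not necessarily associative or commutative) with a differential $d$ satisfying the graded Leibniz rule, equipped with a map $\operatorname{val}:A\to\mathbb{R}\cup\{+\infty\}$ such that $\operatorname{val}^{-1}(+\infty)=\{0\}$ and for all $c\in\Lambda$, $x,y\in A$: $\operatorname{val}(x\cdot y)\ge\operatorname{val}(x)+\operatorname{val}(y)$, $\operatorname{val}(dx)\ge\operatorname{val}(x)$, $\operatorname{val}(cx)=\operatorname{val}(c)+\operatorname{val}(x)$, $\operatorname{val}(x+y)\ge\min\{\operatorname{val}(x),\operatorname{val}(y)\}$; assume $A$ is complete with respect to the non-Archimedean norm $e^{-\operatorname{val}}$. Let $a$ be a nonzero idempotent in the cohomology $H(A)$ (with its induced product). Then every closed element of degree $0$ of $A$ representing $a$ has non-positive valuation.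
   Context: $\Lambda$ is the Novikov field of series $\sum_{i\ge0}a_iT^{\lambda_i}$, $a_i\in\mathbb{Q}$, $\lambda_i\in\mathbb{R}$ strictly increasing to $+\infty$, with valuation $\operatorname{val}$ (smallest exponent with nonzero coefficient). *)

From HB Require Import structures.
From mathcomp Require Import all_boot all_order all_algebra.
From mathcomp Require Import all_classical all_reals.
From mathcomp Require Import ereal Rstruct.
From Stdlib Require Import Rdefinitions.
Set Implicit Arguments. Unset Strict Implicit. Unset Printing Implicit Defensive.
Import Order.TTheory GRing.Theory Num.Theory.
Local Open Scope classical_set_scope.
Local Open Scope ring_scope.

Notation RR := Rdefinitions.R.

(* An element sum_i a_i T^{lambda_i} is represented by its coefficient      *)
(* function f : R -> rat (f l = coefficient of T^l).  The Novikov condition *)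
(* (exponents strictly increasing to +oo) says that below every bound C     *)
(* only finitely many exponents carry a nonzero coefficient.               *)
Definition novikov (f : RR -> rat) : Prop :=
  forall C : RR, finite_set [set l | f l != 0 /\ l <= C].

Definition nov_add (f g : RR -> rat) : RR -> rat := fun l => f l + g l.
Definition nov_opp (f : RR -> rat) : RR -> rat := fun l => - f l.
Definition nov_zero : RR -> rat := fun _ => 0.
Definition nov_one : RR -> rat := fun l => if l == 0 then 1 else 0.
(* Cauchy product: coefficient of T^l is sum_{m} f m * g (l - m)
   (a finite sum for Novikov series). *)
Definition nov_mul (f g : RR -> rat) : RR -> rat :=
  fun l => \sum_(m \in [set: RR]) ((f m * g (l - m)) : rat).
Definition nov_val (f : RR -> rat) : \bar RR :=
  ereal_inf [set (l%:E) | l in [set l | f l != 0]].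

(* d : differential; hom b : the homogeneous elements of degree b         *)
(*   (false = degree 0, true = degree 1); vA : the valuation on A.         *)
Record cvdga (V : zmodType) (sc : (RR -> rat) -> V -> V) (mul : V -> V -> V)
    (d : V -> V) (hom : bool -> set V) (vA : V -> \bar RR) : Prop := {
  sc_addl : forall c c' x, novikov c -> novikov c' ->
              sc (nov_add c c') x = sc c x + sc c' x;
  sc_addr : forall c x y, novikov c -> sc c (x + y) = sc c x + sc c y;
  sc_mul  : forall c c' x, novikov c -> novikov c' ->
              sc (nov_mul c c') x = sc c (sc c' x);
  sc_one  : forall x, sc nov_one x = x;
  mul_addl : forall x y z, mul (x + y) z = mul x z + mul y z;
  mul_addr : forall x y z, mul x (y + z) = mul x y + mul x z;
  mul_scl  : forall c x y, novikov c -> mul (sc c x) y = sc c (mul x y);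
  mul_scr  : forall c x y, novikov c -> mul x (sc c y) = sc c (mul x y);
  hom0  : forall b, hom b 0;
  homD  : forall b x y, hom b x -> hom b y -> hom b (x - y);
  homZ  : forall b c x, novikov c -> hom b x -> hom b (sc c x);
  hom_decomp : forall x, exists x0 x1, hom false x0 /\ hom true x1 /\ x = x0 + x1;
  hom_disj : forall x, hom false x -> hom true x -> x = 0;
  hom_mul : forall i j x y, hom i x -> hom j y -> hom (i (+) j) (mul x y);
  d_add : forall x y, d (x + y) = d x + d y;
  d_sc  : forall c x, novikov c -> d (sc c x) = sc c (d x);
  d_hom : forall b x, hom b x -> hom (~~ b) (d x);
  d_d   : forall x, d (d x) = 0;
  d_leibniz : forall i x y, hom i x ->
      d (mul x y) = mul (d x) y + (if i then - mul x (d y) else mul x (d y));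
  vA_ninfty : forall x, vA x != -oo%E;
  vA_infty  : forall x, vA x = +oo%E <-> x = 0;
  vA_mul : forall x y, (vA x + vA y <= vA (mul x y))%E;
  vA_d   : forall x, (vA x <= vA (d x))%E;
  vA_sc  : forall c x, novikov c -> vA (sc c x) = (nov_val c + vA x)%E;
  vA_add : forall x y, (Order.min (vA x) (vA y) <= vA (x + y))%O;
  (* completeness for the non-Archimedean norm exp(- vA) *)
  vA_complete : forall u : nat -> V,
      (forall M : RR, exists N : nat, forall m n : nat, leq N m -> leq N n ->
          (M%:E <= vA (u m - u n))%O) ->
      exists l, forall M : RR, exists N : nat, forall n : nat, leq N n ->
          (M%:E <= vA (u n - l))%O
}.

Definition closed (V : zmodType) (d : V -> V) (x : V) : Prop := d x = 0.
Definition exact (V : zmodType) (d : V -> V) (x : V) : Prop := exists y, x = d y.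
(* the class [x] of a closed x is a nonzero idempotent of H(A):
   [x] <> 0 and [x][x] = [x x] = [x]. *)
Definition represents_nonzero_idempotent (V : zmodType) (mul : V -> V -> V)
    (d : V -> V) (x : V) : Prop :=
  closed d x /\ ~ exact d x /\ exact d (mul x x - x).

From Pilot Require Import Defs.
From mathcomp Require Import all_boot all_order all_algebra.
From mathcomp Require Import all_classical all_reals.
From mathcomp Require Import ereal Rstruct.
Set Implicit Arguments.
Unset Strict Implicit.
Unset Printing Implicit Defensive.
Import Order.TTheory GRing.Theory Num.Theory.
Local Open Scope classical_set_scope.
Local Open Scope ring_scope.

(* Suppose val x > 0 and write x^2 - x = dy.  Left multiplication L by x is a
   chain map that raises valuations by at least val x, and induction gives
   x = L^n x - d(y + L y + ... + L^(n-1) y).  By completeness the series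
   sum_k L^k y converges to some l, and letting n -> oo yields x = d(-l),
   so the class of x vanishes. *)

Section AdditiveMaps.
Variables (U W : zmodType) (f : U -> W).
Hypothesis fD : {morph f : a b / a + b}.

Lemma morphD0 : f 0 = 0.
Proof. by apply: (addrI (f 0)); rewrite -fD !addr0. Qed.

Lemma morphDN : {morph f : a / - a}.
Proof. by move=> a; apply: (addrI (f a)); rewrite -fD !subrr morphD0. Qed.

Lemma morphDB : {morph f : a b / a - b}.
Proof. by move=> a b; rewrite fD morphDN. Qed.

End AdditiveMaps.

Lemma iter_morphD (U : zmodType) (f : U -> U) (n : nat) :
  {morph f : a b / a + b} -> {morph iter n f : a b / a + b}.
Proof. by move=> fD; elim: n => [//|n IH] a b; rewrite !iterS IH fD. Qed.

Lemma novikov_one : novikov nov_one.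
Proof.
move=> C; apply: (sub_finite_set (B := [set 0])); last exact: finite_set1.
by move=> l [] /=; rewrite /nov_one; case: ifPn => [/eqP //|]; rewrite eqxx.
Qed.

Lemma novikov_zero : novikov nov_zero.
Proof.
move=> C; apply: (sub_finite_set (B := set0)); last exact: finite_set0.
by move=> l [] /=; rewrite /nov_zero; case/negP.
Qed.

Lemma novikov_opp (f : RR -> rat) : novikov f -> novikov (nov_opp f).
Proof.
move=> nf C; apply: sub_finite_set (nf C).
by move=> l [] /=; rewrite /nov_opp oppr_eq0.
Qed.

Lemma nov_val_opp (f : RR -> rat) : nov_val (nov_opp f) = nov_val f.
Proof.
by rewrite /nov_val; congr ereal_inf; apply/seteqP; split=> e [l];
  rewrite /= /nov_opp ?oppr_eq0 => fl <-; exists l; rewrite /= ?oppr_eq0.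
Qed.

Lemma nov_val_one : nov_val nov_one = 0%E.
Proof.
rewrite /nov_val -[RHS](ereal_inf1 (0 : RR)%:E); congr ereal_inf.
apply/seteqP; split=> e /=.
- by case=> l /=; rewrite /nov_one; case: ifPn => [/eqP -> _ <- //|]; rewrite eqxx.
- by move=> ->; exists 0; rewrite //= /nov_one eqxx oner_eq0.
Qed.

Lemma nat_mul_unbounded (v M r : RR) : 0 < v ->
  exists N : nat, forall k : nat, (N <= k)%N -> M <= k%:R * v + r.
Proof.
move=> v0; exists (Num.truncn ((M - r) / v)).+1 => k Nk.
rewrite -lerBlDr -ler_pdivrMr //; apply: ltW; apply: (lt_le_trans (truncnS_gt _)).
by rewrite ler_nat.
Qed.

Section ValuedDGA.
Variables (V : zmodType) (sc : (RR -> rat) -> V -> V) (mul : V -> V -> V).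
Variables (d : V -> V) (hom : bool -> set V) (vA : V -> \bar RR).
Hypothesis A : cvdga sc mul d hom vA.

Let dD : {morph d : a b / a + b} := d_add A.

Lemma sc_opp c w : novikov c -> sc (nov_opp c) w = - sc c w.
Proof.
move=> nc; have sc0 : sc nov_zero w = 0.
  have := sc_addl A w novikov_zero novikov_zero.
  rewrite (_ : nov_add _ _ = nov_zero) => [e|].
    by apply: (addrI (sc nov_zero w)); rewrite addr0 -e.
  by apply: funext => l; rewrite /nov_add /nov_zero addr0.
apply: (addIr (sc c w)); rewrite addNr -(sc_addl A) //; last exact: novikov_opp.
by rewrite -sc0; congr sc; apply: funext => l; rewrite /nov_add /nov_opp addNr.
Qed.

(* Negation is scaling by the Novikov series -1, which has valuation 0. *)
Lemma vA_opp w : vA (- w) = vA w.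
Proof.
rewrite -{1}(sc_one A w) -sc_opp; last exact: novikov_one.
rewrite (vA_sc A) ?nov_val_opp ?nov_val_one ?add0e //.
exact/novikov_opp/novikov_one.
Qed.

Lemma vA_add_ge (M : RR) a b :
  (M%:E <= vA a)%E -> (M%:E <= vA b)%E -> (M%:E <= vA (a + b))%E.
Proof. by move=> ha hb; apply: le_trans (vA_add A a b); rewrite le_min ha hb. Qed.

Lemma vA_sum_ge (M : RR) (m n : nat) (F : nat -> V) :
  (forall k, (m <= k)%N -> (M%:E <= vA (F k))%E) ->
  (M%:E <= vA (\sum_(m <= k < n) F k))%E.
Proof.
move=> hF; rewrite big_nat_cond; apply: (big_ind (fun u => M%:E <= vA u)%E).
- by have [_ ->] := vA_infty A 0; rewrite ?leey.
- exact: vA_add_ge.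
- by move=> k /andP[/andP[mk _] _]; apply: hF.
Qed.

Definition vA_vanishing (u : nat -> V) : Prop :=
  forall M : RR, exists N, forall n, (N <= n)%N -> (M%:E <= vA (u n))%E.

Lemma vA_unbounded_eq0 z : (forall M : RR, (M%:E <= vA z)%E) -> z = 0.
Proof. by move=> hz; apply/(vA_infty A)/eqyP => M _; apply: hz. Qed.

Lemma vA_series_cvg (F : nat -> V) : vA_vanishing F ->
  exists l, vA_vanishing (fun n => \sum_(0 <= k < n) F k - l).
Proof.
move=> hF; apply: (vA_complete A (u := fun n => \sum_(0 <= k < n) F k)) => M.
have [N hN] := hF M; exists N.
suff tail m n : (N <= n <= m)%N ->
    (M%:E <= vA (\sum_(0 <= k < m) F k - \sum_(0 <= k < n) F k))%E.
  move=> m n Nm Nn; have [nm|/ltnW mn] := leqP n m; first by apply: tail; rewrite Nn.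
  by rewrite -vA_opp opprB; apply: tail; rewrite Nm.
case/andP=> Nn nm; rewrite (big_cat_nat (leq0n n) nm) /= addrAC subrr add0r.
by apply: vA_sum_ge => k nk; apply/hN/(leq_trans Nn).
Qed.

Section Idempotent.
Variables (x y : V).
Hypotheses (x_even : hom false x) (x_closed : d x = 0) (x_idem : mul x x - x = d y).

Let LD : {morph mul x : a b / a + b} := mul_addr A x.

Lemma mul_closed_d w : mul x (d w) = d (mul x w).
Proof.
have mul0l : mul 0 w = 0.
  by apply: (@morphD0 _ _ (mul^~ w)) => a b; exact: (Defs.mul_addl A).
by rewrite (d_leibniz A _ x_even) x_closed mul0l add0r.
Qed.

Lemma vA_iter_mul_ge (v : RR) n w : (v%:E <= vA x)%E ->
  ((n%:R * v)%:E + vA w <= vA (iter n (mul x) w))%E.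
Proof.
move=> vx; elim: n w => [|n IH] w; first by rewrite mul0r add0e.
rewrite iterS; apply: le_trans (vA_mul A x _).
by rewrite mulrSr mulrDl mul1r EFinD addeAC addeC; apply: leeD.
Qed.

Lemma idempotent_telescope n :
  x = iter n (mul x) x - d (\sum_(0 <= k < n) iter k (mul x) y).
Proof.
elim: n => [|n IH]; first by rewrite big_geq // (morphD0 dD) subr0.
have Lx : mul x x = x + d y by rewrite -x_idem addrCA subrr addr0.
have iter_d k w : iter k (mul x) (d w) = d (iter k (mul x) w).
  by elim: k => [//|k IHk]; rewrite !iterS IHk mul_closed_d.
rewrite {1}IH iterSr Lx (iter_morphD n LD) iter_d big_nat_recr //= dD.
by rewrite opprD addrA addrAC addrK.
Qed.

Lemma vA_iter_mul_vanishing (v : RR) w : 0 < v -> (v%:E <= vA x)%E ->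
  vA_vanishing (fun n => iter n (mul x) w).
Proof.
move=> v0 vx M; have [r rw] : exists r : RR, (r%:E <= vA w)%E.
  move: (vA_ninfty A w); case: (vA w) => [r||] // _; first by exists r.
  by exists 0; rewrite leey.
have [N hN] := nat_mul_unbounded M r v0; exists N => n Nn.
apply: le_trans (vA_iter_mul_ge n w vx); apply: le_trans (leeD (lexx _) rw).
by rewrite -EFinD lee_fin; apply: hN.
Qed.

Lemma idempotent_pos_exact : (0%:E < vA x)%E -> exact d x.
Proof.
move=> x_pos; have [v v0 vx] : exists2 v : RR, 0 < v & (v%:E <= vA x)%E.
  move: x_pos; case: (vA x) => [r||] // => [r0|_]; last by exists 1; rewrite ?leey.
  by exists r; rewrite -?lte_fin.
have [l hl] := vA_series_cvg (vA_iter_mul_vanishing y v0 vx).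
exists (- l); rewrite (morphDN dD); apply/eqP; rewrite -subr_eq0 opprK.
apply/eqP/vA_unbounded_eq0 => M.
have [N1 h1] := hl M; have [N2 h2] := vA_iter_mul_vanishing x v0 vx M.
pose n := maxn N1 N2.
rewrite {1}(idempotent_telescope n) -addrA [- _ + _]addrC -(morphDB dD).
apply: vA_add_ge; first exact: h2 (leq_maxr _ _).
by apply: le_trans (vA_d A _); rewrite -vA_opp opprB; apply: h1 (leq_maxl _ _).
Qed.

End Idempotent.
End ValuedDGA.

Theorem lemma3p1 (V : zmodType) (sc : (RR -> rat) -> V -> V) (mul : V -> V -> V)
    (d : V -> V) (hom : bool -> set V) (vA : V -> \bar RR) :
  cvdga sc mul d hom vA ->
  forall x : V, hom false x -> represents_nonzero_idempotent mul d x ->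
  (vA x <= 0%:E)%E.
Proof.
move=> A x x_even [x_closed [x_not_exact [y x_idem]]].
rewrite leNgt; apply/negP => /(idempotent_pos_exact A x_even x_closed x_idem).
exact: x_not_exact.
Qed.
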